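(* Given an instance of the Squared Metric Facility Location Problem, let $\alpha$ be the vector of final budgets produced by Algorithm $A1$. Then for every facility $i$ and cities $j$ and $j'$, $\sqrt{\alpha_j} \le \sqrt{\alpha_{j'}} +\sqrt{c_{ij'}} + \sqrt{c_{ij}}$.
   Context: Facility Location instance: finite disjoint sets $C$ (cities), $F$ (facilities), non-negative $c_{ij}$, $f_i$. Squared metric: $\sqrt{c_{ij}}\le \sqrt{c_{ij'}}+\sqrt{c_{i'j'}}+\sqrt{c_{i'j}}$ for all $i,i'\in F$, $j,j'\in C$. Algorithm $A1$: initially all facilities are unopened and all cities unconnected ($U:=C$); each city $j$ has a budget $\alpha_j=0$; an unconnected city $j$ offers $\max(\alpha_j-c_{ij},0)$ to each unopened facility $i$. While $U\ne\emptyset$, the budgets of all unconnected cities increase continuously at the same rate (connected cities' budgets stay fixed) until: (a) for some unconnected $j$ and open $i$, $\alpha_j=c_{ij}$: connect $j$ to $i$ and remove $j$ from $U$; or (b) for some unopened $i$, $\sum_{j\in U}\max(\alpha_j-c_{ij},0)=f_i$: open $i$ and connect to $i$ every unconnected $j$ with $\alpha_j\ge c_{ij}$, removing them from $U$. *)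

From HB Require Import structures.
From mathcomp Require Import all_boot all_order all_algebra.
From mathcomp Require Import Rstruct.
From Stdlib Require Import Reals.
Set Implicit Arguments. Unset Strict Implicit. Unset Printing Implicit Defensive.
Import Order.TTheory GRing.Theory Num.Theory.
Local Open Scope ring_scope.

Definition squared_metric (C F : finType) (c : F -> C -> R) : Prop :=
  forall (i i' : F) (j j' : C),
    Num.sqrt (c i j) <= Num.sqrt (c i j') + Num.sqrt (c i' j') + Num.sqrt (c i' j).

(* A state of algorithm A1:
   - U    : the set of unconnected cities,
   - O    : the set of opened facilities,
   - time : the current time; every unconnected city has budget = time
            (all budgets start at 0 and grow at the same rate while unconnected),
   - frozen : the (fixed) budgets of connected cities. *)
Record A1state (C F : finType) := mkA1state {
  U : {set C};
  O : {set F};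
  time : R;
  frozen : C -> R
}.

Section A1.
Variables (C F : finType) (c : F -> C -> R) (f : F -> R).

Definition budget (st : A1state C F) (j : C) : R :=
  if j \in U st then time st else frozen st j.

Definition offer (st : A1state C F) (i : F) : R :=
  \sum_(j in U st) Num.max (budget st j - c i j) 0.

Definition condA (st : A1state C F) (j : C) (i : F) : Prop :=
  j \in U st /\ i \in O st /\ budget st j = c i j.

Definition condB (st : A1state C F) (i : F) : Prop :=
  i \notin O st /\ offer st i = f i.

Definition some_event (st : A1state C F) : Prop :=
  (exists j i, condA st j i) \/ (exists i, condB st i).

Definition at_time (st : A1state C F) (s : R) : A1state C F :=
  mkA1state (U st) (O st) s (frozen st).

(* One step of A1 (only while U is nonempty):
   - event (a): connect j to the open facility i;
   - event (b): open i and connect every unconnected j with alpha_j >= c_ij;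
   - continuous growth: the time (= budgets of unconnected cities) increases
     from t to t' > t, where t' is the first moment at which an event
     condition holds (no event condition holds on [t, t')). *)
Inductive A1step : A1state C F -> A1state C F -> Prop :=
  | stepA st j i :
      U st != set0 -> condA st j i ->
      A1step st (mkA1state (U st :\ j) (O st) (time st) (budget st))
  | stepB st i :
      U st != set0 -> condB st i ->
      A1step st (mkA1state (U st :\: [set j in U st | c i j <= budget st j])
                           (i |: O st) (time st) (budget st))
  | stepGrow st t' :
      U st != set0 -> time st < t' ->
      (forall s, time st <= s -> s < t' -> ~ some_event (at_time st s)) ->
      some_event (at_time st t') ->
      A1step st (at_time st t').

Definition A1init : A1state C F := mkA1state setT set0 0 (fun _ => 0).

Inductive A1reach : A1state C F -> Prop :=
  | reach_init : A1reach A1init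
  | reach_step st st' : A1reach st -> A1step st st' -> A1reach st'.

Definition A1_final_budgets (alpha : C -> R) : Prop :=
  exists st, A1reach st /\ U st = set0 /\ alpha = budget st.

End A1.

(** Every connected city j is connected to an open facility i with c_ij <= alpha_j,
    and every city k connected after j stayed unconnected while i was open, so
    alpha_k <= c_ik; cities connected before j have alpha_k <= alpha_j.  Hence for
    the witness i' of j' either alpha_j <= alpha_j' or alpha_j <= c_i'j, and the
    squared metric inequality for (i', i, j, j') finishes the bound. *)
From HB Require Import structures.
From mathcomp Require Import all_boot all_order all_algebra.
From mathcomp Require Import Rstruct.
From Stdlib Require Import Reals.
From mathcomp Require Import lra.
Set Implicit Arguments. Unset Strict Implicit. Unset Printing Implicit Defensive.
Import Order.TTheory GRing.Theory Num.Theory.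
Local Open Scope ring_scope.

Section Invariant.
Variables (C F : finType) (c : F -> C -> R) (f : F -> R).

Definition connection_witness (st : A1state C F) (j : C) (i : F) : Prop :=
  i \in O st /\ c i j <= frozen st j /\
  forall k, k \notin U st -> frozen st k <= frozen st j \/ frozen st k <= c i k.

Record A1inv (st : A1state C F) : Prop := {
  unconnected_time_le_cost : forall k i, k \in U st -> i \in O st -> time st <= c i k;
  frozen_le_time : forall k, k \notin U st -> frozen st k <= time st;
  connected_witness : forall j, j \notin U st -> exists i, connection_witness st j i
}.

Lemma budget_le_time st k : A1inv st -> budget st k <= time st.
Proof.
move=> Hinv; rewrite /budget; case: ifPn => // Hk.
exact: frozen_le_time Hinv k Hk.
Qed.

(* Both connection events freeze the current budgets and shrink U; the newly
   connected cities get budget [time st], which is maximal among frozen ones. *)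
Lemma A1inv_connect st (U' : {set C}) (O' : {set F}) :
  A1inv st -> U' \subset U st -> O st \subset O' ->
  (forall k i, k \in U' -> i \in O' -> time st <= c i k) ->
  (forall j, j \in U st -> j \notin U' -> exists2 i, i \in O' & c i j <= time st) ->
  A1inv (mkA1state U' O' (time st) (budget st)).
Proof.
move=> Hinv sU sO Hcost Hnew; split=> //= [k _|j Hj].
  exact: budget_le_time.
case: (boolP (j \in U st)) => HjU.
  have [i Hi Hc] := Hnew j HjU Hj.
  exists i; split=> //=; split=> [|k _]; first by rewrite /budget HjU.
  by left; rewrite {2}/budget HjU; exact: budget_le_time.
have [i [Hi [Hc Hk]]] := connected_witness Hinv HjU.
exists i; split; first exact: subsetP sO i Hi.
rewrite /= /budget (negbTE HjU); split=> // k _.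
case: ifPn => HkU; last exact: Hk.
by right; exact: unconnected_time_le_cost Hinv k i HkU Hi.
Qed.

Lemma A1inv_grow st t' :
  A1inv st -> time st < t' ->
  (forall s, time st <= s -> s < t' -> ~ some_event c f (at_time st s)) ->
  A1inv (at_time st t').
Proof.
move=> Hinv Ht Hno; split=> /= [k i Hk Hi|k Hk|j Hj].
- rewrite leNgt; apply/negP => Hlt.
  apply: (Hno (c i k) (unconnected_time_le_cost Hinv Hk Hi) Hlt).
  by left; exists k, i; rewrite /condA /budget /= Hk.
- exact: le_trans (frozen_le_time Hinv Hk) (ltW Ht).
- exact: connected_witness Hinv j Hj.
Qed.

Lemma A1step_inv st st' : A1inv st -> A1step c f st st' -> A1inv st'.
Proof.
move=> Hinv Hs; case: Hs Hinv => {st st'}.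
- move=> st j i _ [Hj [Hi Hb]] Hinv; apply: A1inv_connect => //.
  + by apply/subsetP=> x; rewrite in_setD1 => /andP[].
  + move=> k i0; rewrite in_setD1 => /andP[_ Hk].
    exact: unconnected_time_le_cost Hinv k i0 Hk.
  + move=> j0 Hj0; rewrite in_setD1 Hj0 andbT negbK => /eqP ->.
    by exists i => //; move: Hb; rewrite /budget Hj => ->.
- move=> st i _ [Hi _] Hinv; apply: A1inv_connect => //.
  + by apply/subsetP=> x; rewrite in_setD => /andP[].
  + by apply/subsetP=> x Hx; rewrite in_setU1 Hx orbT.
  + move=> k i0; rewrite in_setD inE => /andP[Hn Hk].
    rewrite in_setU1 => /orP[/eqP -> | Hi0].
      by move: Hn; rewrite Hk /budget Hk /= -ltNge => /ltW.
    exact: unconnected_time_le_cost Hinv k i0 Hk Hi0.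
  + move=> j0 Hj0; rewrite in_setD Hj0 andbT negbK inE Hj0 /budget Hj0 => Hc.
    by exists i; first by rewrite in_setU1 eqxx.
- by move=> st t' _ Ht Hno _ Hinv; exact: A1inv_grow.
Qed.

Lemma A1reach_inv st : A1reach c f st -> A1inv st.
Proof.
elim=> [|s s' _ IH Hs]; last exact: A1step_inv IH Hs.
by split=> [k i _|k|j]; rewrite /= inE.
Qed.

Lemma final_budgets_witness alpha :
  A1_final_budgets c f alpha ->
  forall j', exists i', c i' j' <= alpha j' /\
    forall j, alpha j <= alpha j' \/ alpha j <= c i' j.
Proof.
move=> [st [Hr [HU ->]]] j'.
have connected k : k \notin U st by rewrite HU inE.
have frozenE k : budget st k = frozen st k by rewrite /budget (negbTE (connected k)).
have [i' [_ [Hc Hk]]] := connected_witness (A1reach_inv Hr) (connected j').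
by exists i'; rewrite !frozenE; split=> // j; rewrite frozenE; exact: Hk.
Qed.

End Invariant.

Lemma sqrt_le_via_witness (C F : finType) (c : F -> C -> R) (alpha : C -> R)
    (i i' : F) (j j' : C) :
  squared_metric c -> (forall i j, 0 <= c i j) ->
  c i' j' <= alpha j' -> alpha j <= alpha j' \/ alpha j <= c i' j ->
  Num.sqrt (alpha j) <= Num.sqrt (alpha j') + Num.sqrt (c i j') + Num.sqrt (c i j).
Proof.
move=> hsq c_ge0 Hc' Hj.
have Htri := hsq i' i j j'.
have Hsa := ler_wsqrtr Hc'.
have := sqrtr_ge0 (c i j'); have := sqrtr_ge0 (c i j); have := sqrtr_ge0 (c i' j').
by case: Hj => /ler_wsqrtr; lra.
Qed.

Theorem lemma1 (C F : finType) (c : F -> C -> R) (f : F -> R)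
  (c_ge0 : forall i j, 0 <= c i j) (f_ge0 : forall i, 0 <= f i)
  (hsq : squared_metric c) (alpha : C -> R)
  (halpha : A1_final_budgets c f alpha) :
  forall (i : F) (j j' : C),
    Num.sqrt (alpha j) <= Num.sqrt (alpha j') + Num.sqrt (c i j') + Num.sqrt (c i j).
Proof.
move=> i j j'.
have [i' [Hc' Hj]] := final_budgets_witness halpha j'.
exact: sqrt_le_via_witness hsq c_ge0 Hc' (Hj j).
Qed.
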